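(* Let $X$ be a compact metric space with more than one point, and let $\Delta:\mathrm{C}(X)^+\setminus\{0\}\to(0,+\infty)$ be an order-preserving map. For every finite set $\mathcal F\subseteq\mathrm{C}(X)$, every $\varepsilon>0$ and every $M\in\mathbb N$, there exist a finite set $\mathcal H\subseteq\mathrm{C}(X)^+\setminus\{0\}$ with $\mathrm{supp}(h)\neq X$ for each $h\in\mathcal H$, and $L\in\mathbb N$, with the following property. If $n>L$ and $\theta:\mathrm{C}(X)\to\mathrm{M}_n(\mathbb C)$ is a unital point-evaluation map with $\mathrm{tr}(\theta(h))>\Delta(h)$ for all $h\in\mathcal H$, then there are integers $n_0,n_1\ge0$ with $n_0+Mn_1=n$ and $n_0\le n_1$, unital point-evaluation maps $\theta_0:\mathrm{C}(X)\to\mathrm{M}_{n_0}(\mathbb C)$ and $\theta_1:\mathrm{C}(X)\to\mathrm{M}_{n_1}(\mathbb C)$ (with $\theta_0=0$ if $n_0=0$), and a permutation unitary $u\in\mathrm{M}_n(\mathbb C)$ such that $$\|\theta(a)-u^*(\theta_0(a)\oplus\underbrace{\theta_1(a)\oplus\cdots\oplus\theta_1(a)}_{M})u\|<\varepsilon,\quad a\in\mathcal F.$$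
   Context: A unital point-evaluation map $\theta:\mathrm{C}(X)\to\mathrm{M}_n(\mathbb C)$ is one of the form $\theta(f)=\mathrm{diag}(f(x_1),\dots,f(x_n))$ for some $x_1,\dots,x_n\in X$. $\mathrm{tr}$ denotes the normalized trace on $\mathrm{M}_n(\mathbb C)$. *)

From HB Require Import structures.
From mathcomp Require Import all_boot all_order all_algebra.
From mathcomp Require Import all_classical all_reals all_analysis.
From mathcomp Require Import complex perm.
Import Order.TTheory GRing.Theory Num.Theory numFieldNormedType.Exports.
Import ComplexField.
Set Implicit Arguments. Unset Strict Implicit. Unset Printing Implicit Defensive.
Local Open Scope ring_scope.
Local Open Scope classical_set_scope.

(* C(X): continuous complex-valued functions on X (R[i] carries the
   topology of its norm). *)
Definition CX (R : realType) (X : topologicalType) : set (X -> R[i]) :=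
  [set f | continuous (f : X -> (R[i] : numFieldType))].

(* C(X)^+ \ {0}: continuous, pointwise nonnegative (in the order of C,
   i.e. real and >= 0), and not identically zero. *)
Definition CXpos0 (R : realType) (X : topologicalType) : set (X -> R[i]) :=
  [set f | CX f /\ (forall x, 0 <= f x) /\ f <> (fun _ => 0)].

Definition supp (R : realType) (X : topologicalType) (f : X -> R[i]) : set X :=
  closure [set x | f x != 0].

Definition order_preserving_pos (R : realType) (X : topologicalType)
    (Delta : (X -> R[i]) -> R) : Prop :=
  (forall f, CXpos0 f -> 0 < Delta f) /\
  (forall f g, CXpos0 f -> CXpos0 g -> (forall x, f x <= g x) ->
     Delta f <= Delta g).

(* unital point-evaluation map given by points x_0, ..., x_{n-1} *)
Definition pteval (R : realType) (X : Type) (n : nat) (pts : 'I_n -> X)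
    (f : X -> R[i]) : 'M[R[i]]_n :=
  diag_mx (\row_i f (pts i)).

Definition ntr (R : realType) (n : nat) (A : 'M[R[i]]_n) : R[i] :=
  \tr A / n%:R.

Definition cmod (R : realType) (z : R[i]) : R :=
  Num.sqrt (complex.Re z ^+ 2 + complex.Im z ^+ 2).

Definition vnorm (R : realType) (n : nat) (v : 'cV[R[i]]_n) : R :=
  Num.sqrt (\sum_(i < n) cmod (v i 0) ^+ 2).

Definition opnorm (R : realType) (n : nat) (A : 'M[R[i]]_n) : R :=
  sup [set vnorm (A *m v) | v in [set v : 'cV[R[i]]_n | vnorm v <= 1]].

Definition adj (R : realType) (n : nat) (A : 'M[R[i]]_n) : 'M[R[i]]_n :=
  (map_mx Num.conj A)^T.

Lemma sum_const_ord (M k : nat) : (\sum_(i < M) k)%N = (M * k)%N.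
Proof. by rewrite sum_nat_const card_ord. Qed.

Definition mxrep (R : realType) (M k : nat) (B : 'M[R[i]]_k) : 'M[R[i]]_(M * k) :=
  castmx (sum_const_ord M k, sum_const_ord M k) (\mxdiag_(i < M) B).

Definition dsum (R : realType) (n n0 n1 M : nat) (E : (n0 + M * n1)%N = n)
    (A : 'M[R[i]]_n0) (B : 'M[R[i]]_n1) : 'M[R[i]]_n :=
  castmx (E, E) (block_mx A 0 0 (mxrep M B)).

From HB Require Import structures.
From mathcomp Require Import all_boot all_order all_algebra.
From mathcomp Require Import all_classical all_reals all_analysis.
From mathcomp Require Import complex perm.
Import Order.TTheory GRing.Theory Num.Theory numFieldNormedType.Exports.
Import ComplexField.
From mathcomp Require Import ring lra zify.
Local Open Scope ring_scope.
Local Open Scope classical_set_scope.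

(* For the statement as formulated, the trace condition can be
   dropped: the empty family H works, with L = M * M * K for a suitable K.
   1. By compactness, X is covered by finitely many sets V_1, ..., V_K on each
      of which every a in F oscillates by less than eps/2; this yields a
      classification cl : X -> 'I_K with representatives rep.
   2. Replacing each point x_i of theta by rep (cl x_i) moves every diagonal
      entry of theta(a) by less than eps/2, hence theta(a) by at most eps/2
      in operator norm (a difference of diagonal matrices).
   3. Combinatorics: a class of multiplicity c_j contributes c_j %/ M points to
      theta_1 and c_j %% M points to theta_0; then n_0 <= K (M - 1), and
      n > M^2 K forces n_0 <= n_1.
   4. The resulting point-evaluation theta_0 + M theta_1 is, after conjugation
      by a permutation matrix, exactly the perturbed theta of step 2.
   The file develops these four ingredients in order and combines them. *)

Section Compactness.
Context {R : realType} {X : pseudoMetricType R}.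

(* The library's finite-subcover characterization of compactness is stated
   for pointed spaces; [pointed_at x0] equips X with the point x0. *)
Definition pointed_at (x0 : X) : Type := X.
HB.instance Definition _ (x0 : X) := Topological.on (pointed_at x0).
HB.instance Definition _ (x0 : X) := isPointed.Build (pointed_at x0) x0.

Lemma compact_cover_compact (x0 : X) :
  compact [set: X] -> cover_compact [set: X].
Proof.
by move=> cX; have := @compact_cover (pointed_at x0); move=> <-.
Qed.

Lemma normc_cmod (z : R[i]) : `|z| = ((cmod z)%:C)%C.
Proof. by rewrite normc_def. Qed.

Lemma near_close_all (F : seq (X -> R[i])) (x : X) (e : R) :
  0 < e -> {subset F <= @CX R X} ->
  \forall y \near x, forall g, g \in F -> cmod (g y - g x) < e.
Proof.
move=> e0; elim: F => [|g F IH] HF; first by apply: nearW => y g.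
have /set_mem g_cont := HF g (mem_head g F).
have e0C : (0 : R[i]) < (e%:C)%C by rewrite ltcR.
have near_g : \forall t \near x, `|g t - g x| < (e%:C)%C.
  exact: (@cvgr_distC_lt _ (R[i] : numFieldType) _ _ _ g (g x) (g_cont x)).
have near_F := IH (fun h hF => HF h (mem_behead (s := g :: F) hF)).
apply: filterS2 near_g near_F => y gy Fy h; rewrite inE => /orP [/eqP -> | hF].
  by rewrite -ltcR -normc_cmod.
exact: Fy.
Qed.

Lemma finite_classification (cX : compact [set: X]) (x0 : X)
    {F : seq (X -> R[i])} {e : R} :
  0 < e -> {subset F <= @CX R X} ->
  exists (K : nat) (rep : 'I_K -> X) (cl : X -> 'I_K),
    forall y g, g \in F -> cmod (g y - g (rep (cl y))) < e.
Proof.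
move=> e0 HF.
pose V (x : X) := [set y | forall g, g \in F -> cmod (g y - g x) < e].
have [|y _|D _ Dcov] := compact_cover_compact x0 cX X setT (interior \o V).
- by move=> x _; exact: open_interior.
- by exists y => //; exact: near_close_all.
pose s : seq X := finmap.enum_fset D.
have /choice [cl Hcl] : forall y, exists j : 'I_(size s), V (nth x0 s j) y.
  move=> y; have [x Dx /interior_subset Vxy] := Dcov y Logic.I.
  have xs : x \in s by [].
  by exists (Ordinal (etrans (index_mem x s) xs)); rewrite /= nth_index.
by exists (size s), (fun j => nth x0 s j), cl => y g gF; exact: Hcl.
Qed.

End Compactness.

Section Combinatorics.

Definition multiset_of {K : nat} (g : 'I_K -> nat) : seq 'I_K :=
  flatten [seq nseq (g j) j | j <- enum 'I_K].

Lemma count_multiset_of K (g : 'I_K -> nat) (y : 'I_K) :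
  count_mem y (multiset_of g) = g y.
Proof.
rewrite count_flatten -map_comp sumnE big_map big_enum /= (bigD1 y) //=.
rewrite big1 => [|j /negbTE jy]; last by rewrite count_nseq /= jy.
by rewrite count_nseq /= eqxx mul1n addn0.
Qed.

Lemma size_multiset_of K (g : 'I_K -> nat) :
  size (multiset_of g) = (\sum_(j < K) g j)%N.
Proof.
rewrite size_flatten /shape -map_comp sumnE big_map big_enum /=.
by apply: eq_bigr => j _; exact: size_nseq.
Qed.

Lemma count_flatten_nseq (T : eqType) (y : T) m (t : seq T) :
  count_mem y (flatten (nseq m t)) = (m * count_mem y t)%N.
Proof. by elim: m => //= m IH; rewrite count_cat IH mulSn. Qed.

Lemma size_flatten_nseq (T : Type) m (t : seq T) :
  size (flatten (nseq m t)) = (m * size t)%N.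
Proof. by rewrite size_flatten /shape map_nseq sumn_nseq mulnC. Qed.

Lemma map_nth_enum {X : Type} (x0 : X) {T : Type} (f : X -> T) (s : seq X) :
  [seq f (nth x0 s i) | i : 'I_(size s) <- enum 'I_(size s)] = map f s.
Proof.
by rewrite -[in RHS](mkseq_nth x0 s) /mkseq -val_enum_ord -!map_comp.
Qed.

(* Step 3: once n > M^2 K, a multiset of n labels in 'I_K splits as
   s0 + M * s1 with #s0 <= #s1 (divide each multiplicity by M). *)
Lemma multiset_split {K M n : nat} {ws : seq 'I_K} :
  size ws = n -> (M * M * K < n)%N ->
  exists s0 s1 : seq 'I_K,
    (size s0 <= size s1)%N /\ perm_eq ws (s0 ++ flatten (nseq M s1)).
Proof.
move=> Hn HL; case: (posnP M) => [-> | M_gt0].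
  by exists ws, ws; rewrite cats0.
pose c j := count_mem j ws.
pose s0 := multiset_of (fun j => (c j %% M)%N).
pose s1 := multiset_of (fun j => (c j %/ M)%N).
have Hperm : perm_eq ws (s0 ++ flatten (nseq M s1)).
  apply/allP => y _ /=.
  rewrite count_cat count_flatten_nseq !count_multiset_of -/(c y).
  by rewrite {1}(divn_eq (c y) M) addnC mulnC.
exists s0, s1; split => //.
have size_ws : n = (size s0 + M * size s1)%N.
  by rewrite -Hn (perm_size Hperm) size_cat size_flatten_nseq.
have size_s0 : (size s0 + K <= K * M)%N.
  have sum_ones : K = (\sum_(j < K) 1)%N by rewrite sum_nat_const card_ord muln1.
  rewrite size_multiset_of [X in (_ + X <= _)%N]sum_ones.
  rewrite [X in (_ <= X * _)%N]sum_ones -big_split big_distrl /=.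
  apply: leq_sum => j _.
  by rewrite mul1n addn1 ltn_pmod.
rewrite leqNgt; apply/negP => Hlt.
have h1 : (M * (size s1).+1 <= M * size s0)%N by rewrite leq_mul2l Hlt orbT.
have h2 : (M.+1 * (size s0 + K) <= M.+1 * (K * M))%N.
  by rewrite leq_mul2l size_s0 orbT.
nia.
Qed.

End Combinatorics.

Section DiagonalMatrices.
Context {R : realType}.

Definition diag_by {n : nat} (A : 'M[R[i]]_n) (s : seq R[i]) :=
  forall i j : 'I_n, A i j = if (i : nat) == j then s`_i else 0.

Lemma diag_by_cast m n (E : m = n) (A : 'M[R[i]]_m) s :
  diag_by A s -> diag_by (castmx (E, E) A) s.
Proof. by move=> HA i j; rewrite castmxE HA. Qed.

Lemma diag_by_block p q (A : 'M[R[i]]_p) (B : 'M[R[i]]_q) s t :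
  diag_by A s -> diag_by B t -> size s = p -> diag_by (block_mx A 0 0 B) (s ++ t).
Proof.
move=> HA HB Hs i j.
case: (split_ordP i) => i' ->; case: (split_ordP j) => j' ->.
- by rewrite block_mxEul HA /= nth_cat Hs ltn_ord.
- rewrite block_mxEur mxE /=; case: eqP => // E.
  by have := ltn_ord i'; rewrite E; lia.
- rewrite block_mxEdl mxE /=; case: eqP => // E.
  by have := ltn_ord j'; rewrite -E; lia.
- rewrite block_mxEdr HB /= nth_cat Hs ltnNge leq_addr /= addKn.
  by rewrite eqn_add2l.
Qed.

Lemma diag_by_mxrep M k (B : 'M[R[i]]_k) t :
  diag_by B t -> size t = k -> diag_by (mxrep M B) (flatten (nseq M t)).
Proof.
move=> HB Ht; apply: diag_by_cast; elim: M => [|M IH].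
  by case=> i Hi; exfalso; move: Hi; rewrite big_ord0.
by rewrite mxdiag_recl; apply: diag_by_cast; exact: diag_by_block.
Qed.

Lemma diag_by_dsum n n0 n1 M (E : (n0 + M * n1)%N = n)
    (A : 'M[R[i]]_n0) (B : 'M[R[i]]_n1) s t :
  diag_by A s -> diag_by B t -> size s = n0 -> size t = n1 ->
  diag_by (dsum E A B) (s ++ flatten (nseq M t)).
Proof.
by move=> HA HB Hs Ht; apply/diag_by_cast/diag_by_block => //; exact: diag_by_mxrep.
Qed.

Lemma pteval_diag {X : Type} {n : nat} (pts : 'I_n -> X) (f : X -> R[i]) i j :
  pteval pts f i j = if i == j then f (pts i) else 0.
Proof. by rewrite !mxE; case: eqP; rewrite ?mulr1n ?mulr0n. Qed.

Lemma diag_by_pteval {X : Type} {n : nat} (pts : 'I_n -> X) (f : X -> R[i]) :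
  diag_by (pteval pts f) [seq f (pts i) | i <- enum 'I_n].
Proof.
move=> i j; rewrite pteval_diag (nth_map i) ?size_enum_ord // nth_ord_enum.
by congr (if _ then _ else _).
Qed.

End DiagonalMatrices.

Section PermutationConjugation.
Context {R : realType}.

Lemma adj_perm_mx n (s : 'S_n) : adj (perm_mx s : 'M[R[i]]_n) = perm_mx (s^-1)%g.
Proof.
rewrite /adj -tr_perm_mx; congr trmx; apply/matrixP => i j.
by rewrite !mxE conjC_nat.
Qed.

Lemma perm_conjE n (A : 'M[R[i]]_n) (s : 'S_n) i j :
  (adj (perm_mx s) *m A *m perm_mx s) i j = A ((s^-1)%g i) ((s^-1)%g j).
Proof.
rewrite adj_perm_mx -row_permE -[s in perm_mx s](invgK s) -col_permE.
by rewrite !mxE.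
Qed.

Lemma pteval_perm_dsum {X : eqType} (x0 : X) {n : nat} {r : 'I_n -> X} {M : nat}
    {q0 q1 : seq X} :
  perm_eq [seq r i | i <- enum 'I_n] (q0 ++ flatten (nseq M q1)) ->
  exists (E : (size q0 + M * size q1)%N = n) (s : 'S_n),
    forall a : X -> R[i],
      adj (perm_mx s) *m dsum E (pteval (fun i => nth x0 q0 i) a)
                                (pteval (fun i => nth x0 q1 i) a) *m perm_mx s
      = pteval r a.
Proof.
set q := q0 ++ _ => Hperm.
have size_q : size q == n by rewrite -(perm_size Hperm) size_map size_enum_ord.
have E : (size q0 + M * size q1)%N = n.
  by move/eqP: size_q; rewrite size_cat size_flatten_nseq.
have /tuple_permP [p Hp] : perm_eq [seq r i | i <- enum 'I_n] (Tuple size_q).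
  exact: Hperm.
have r_nth i : r i = nth x0 q (p i).
  have := congr1 (fun s => nth x0 s i) Hp => /=.
  rewrite (nth_map i) ?size_enum_ord // nth_ord_enum => ->.
  rewrite -(tnth_nth x0 [tuple tnth (Tuple size_q) (p k) | k < n] i).
  by rewrite tnth_mktuple (tnth_nth x0).
exists E, (p^-1)%g => a; apply/matrixP => i j.
have D : diag_by (dsum E (pteval (fun i => nth x0 q0 i) a)
                         (pteval (fun i => nth x0 q1 i) a)) (map a q).
  have D0 := diag_by_pteval (fun i : 'I_(size q0) => nth x0 q0 i) a.
  have D1 := diag_by_pteval (fun i : 'I_(size q1) => nth x0 q1 i) a.
  rewrite map_nth_enum in D0; rewrite map_nth_enum in D1.
  rewrite map_cat map_flatten map_nseq.
  by apply: diag_by_dsum D0 D1 _ _; rewrite size_map.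
rewrite perm_conjE invgK D pteval_diag.
have -> : ((p i : nat) == p j) = (i == j).
  by apply/eqP/eqP => [/val_inj/perm_inj | ->].
by case: eqP => // _; rewrite (nth_map x0) ?r_nth // (eqP size_q).
Qed.

End PermutationConjugation.

Section OperatorNorm.
Context {R : realType}.

Lemma cmod_ge0 (z : R[i]) : 0 <= cmod z.
Proof. exact: sqrtr_ge0. Qed.

Lemma cmodM_sqr (x y : R[i]) : cmod (x * y) ^+ 2 = cmod x ^+ 2 * cmod y ^+ 2.
Proof.
have cmod_sqr (z : R[i]) : cmod z ^+ 2 = complex.Re z ^+ 2 + complex.Im z ^+ 2.
  by rewrite /cmod sqr_sqrtr // addr_ge0 // sqr_ge0.
by rewrite !cmod_sqr; case: x => a b; case: y => c d /=; ring.
Qed.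

Lemma opnorm_diag_le n (A : 'M[R[i]]_n) (d : 'I_n -> R[i]) (c : R) :
  0 <= c -> (forall i j, A i j = if i == j then d i else 0) ->
  (forall i, cmod (d i) <= c) -> opnorm A <= c.
Proof.
move=> c0 HA Hd; apply: ge_sup.
  exists (vnorm (A *m 0)), 0 => //=.
  rewrite /vnorm big1 ?sqrtr0 // => i _.
  by rewrite mxE /cmod /= expr0n /= addr0 sqrtr0 expr0n.
move=> y [v /= Hv <-].
have Av i : (A *m v) i 0 = d i * v i 0.
  rewrite mxE (bigD1 i) //= big1 ?addr0 ?HA ?eqxx // => j /negbTE ji.
  by rewrite HA eq_sym ji mul0r.
have Hv2 : \sum_(i < n) cmod (v i 0) ^+ 2 <= 1.
  by move: Hv; rewrite /vnorm -sqrtr1 ler_sqrt // sqrtr1.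
rewrite /vnorm -[c](@ger0_norm _ c) // -sqrtr_sqr ler_sqrt ?sqr_ge0 //.
apply: (@le_trans _ _ (\sum_(i < n) c ^+ 2 * cmod (v i 0) ^+ 2)).
  apply: ler_sum => i _; rewrite Av cmodM_sqr.
  apply: ler_wpM2r; first exact: sqr_ge0.
  by have := Hd i; have := cmod_ge0 (d i); nra.
by rewrite -mulr_sumr; have := sqr_ge0 c; nra.
Qed.

Lemma opnorm_pteval_sub {X : Type} {n : nat} (p r : 'I_n -> X) (a : X -> R[i]) (c : R) :
  0 <= c -> (forall i, cmod (a (p i) - a (r i)) <= c) ->
  opnorm (pteval p a - pteval r a) <= c.
Proof.
move=> c0; apply: opnorm_diag_le => // i j.
by rewrite !mxE; case: eqP; rewrite ?mulr1n ?mulr0n ?subr0.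
Qed.

End OperatorNorm.

Theorem lemma7p7 (R : realType) (X : pseudoMetricType R)
    (hX : hausdorff_space X) (cX : compact [set: X])
    (two_pts : exists x y : X, x != y)
    (Delta : (X -> R[i]) -> R) (hDelta : @order_preserving_pos R X Delta) :
  forall (F : seq (X -> R[i])), {subset F <= @CX R X} ->
  forall (eps : R), 0 < eps -> forall M : nat,
  exists (H : seq (X -> R[i])) (L : nat),
    (forall h, h \in H -> CXpos0 h /\ supp h <> [set: X]) /\
    forall (n : nat) (pts : 'I_n -> X), (L < n)%N ->
      (forall h, h \in H -> ((Delta h)%:C)%C < ntr (pteval pts h)) ->
      exists (n0 n1 : nat) (E : (n0 + M * n1)%N = n)
             (pts0 : 'I_n0 -> X) (pts1 : 'I_n1 -> X) (s : 'S_n),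
        (n0 <= n1)%N /\
        forall a, a \in F ->
          opnorm (pteval pts a -
                  adj (perm_mx s) *m dsum E (pteval pts0 a) (pteval pts1 a)
                    *m perm_mx s) < eps.
Proof.
move=> F HF eps eps0 M.
have [x0 _] := two_pts.
have eps2_gt0 : 0 < eps / 2 by rewrite divr_gt0.
have [K [rep [cl close]]] := finite_classification cX x0 eps2_gt0 HF.
exists [::], (M * M * K)%N; split=> // n pts Hn _.
pose r i := rep (cl (pts i)).
have size_cls : size [seq cl (pts i) | i <- enum 'I_n] = n.
  by rewrite size_map size_enum_ord.
have [s0 [s1 [size_le Hperm]]] := multiset_split size_cls Hn.
have /(pteval_perm_dsum (R := R) x0) [E [s conj_r]] :
    perm_eq [seq r i | i <- enum 'I_n]
            (map rep s0 ++ flatten (nseq M (map rep s1))).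
  by have := perm_map rep Hperm; rewrite map_cat map_flatten map_nseq -map_comp.
exists _, _, E, (fun i => nth x0 (map rep s0) i),
  (fun i => nth x0 (map rep s1) i), s.
split=> [|a aF]; first by rewrite !size_map.
rewrite conj_r; apply: (@le_lt_trans _ _ (eps / 2)).
  by apply: opnorm_pteval_sub => [|i]; [exact: ltW | apply/ltW/close].
by rewrite ltr_pdivrMr // ltr_pMr // ltr1n.
Qed.
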